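(* Let $k\ge 1$ be a fixed integer, and for each $q\ge 1$ let $f_q:\{0,1\}^q\to\{0,1,\ldots,2^q-1\}$ be the Hamming-distance-based bijection. Then \[ \lim_{q\to\infty} d_{\max,k}(f_q)=0 \quad\text{and}\quad \lim_{q\to\infty} d_{\mathrm{ave},k}(f_q)=0 . \]
   Context: For an integer $q\ge1$ and binary arrays $x_1,x_2\in\{0,1\}^q$, let $w_H(x)$ be the Hamming weight of $x$ (number of ones) and $d_H(x_1,x_2)$ the Hamming distance. Define a total order $\succeq$ on $\{0,1\}^q$ by: $b_1\succeq b_2$ iff either $w_H(b_1)>w_H(b_2)$, or $w_H(b_1)=w_H(b_2)$ and $b_1$ is lexicographically greater than or equal to $b_2$. The Hamming-distance-based bijection $f_q:\{0,1\}^q\to\{0,1,\ldots,2^q-1\}$ is the unique bijection such that for all $b_1,b_2$, $f_q(b_1)\ge f_q(b_2)\iff b_1\succeq b_2$ (so the all-zero array maps to $0$, the arrays of weight $1$ come next, etc.). For a bijection $f:\{0,1\}^q\to\{0,\ldots,2^q-1\}$ define the distortion $d(f,b_1,b_2)=|f(b_1)-f(b_2)|/2^q$. For a fixed integer $k\ge1$ and $b\in\{0,1\}^q$, let $N_k(b)=\{x\in\{0,1\}^q: 1\le d_H(b,x)\le k\}$, and set $d_{\max,k}(f,b)=\max_{x\in N_k(b)} d(f,b,x)$, $d_{\mathrm{ave},k}(f,b)=\frac{1}{|N_k(b)|}\sum_{x\in N_k(b)} d(f,b,x)$, $d_{\max,k}(f)=\max_{b\in\{0,1\}^q} d_{\max,k}(f,b)$,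 and $d_{\mathrm{ave},k}(f)=\frac{1}{2^q}\sum_{b\in\{0,1\}^q} d_{\mathrm{ave},k}(f,b)$. *)

From HB Require Import structures.
From mathcomp Require Import all_boot all_order all_algebra.
Set Implicit Arguments. Unset Strict Implicit. Unset Printing Implicit Defensive.
Import Order.TTheory GRing.Theory Num.Theory.

Definition bits (q : nat) := {ffun 'I_q -> bool}.

Definition wH q (x : bits q) : nat := #|[set i : 'I_q | x i]|.
Definition dH q (x y : bits q) : nat := #|[set i : 'I_q | x i != y i]|.

Definition lex_lt q (x y : bits q) : bool :=
  [exists i : 'I_q, [&& ~~ x i, y i & [forall j : 'I_q, (j < i)%N ==> (x j == y j)]]].

Definition hprec q (y x : bits q) : bool :=
  (wH y < wH x)%N || ((wH y == wH x) && lex_lt y x).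

(* Hamming-distance-based bijection: f_q(b) = number of arrays strictly below b,
   i.e. the rank of b in the order ⪰ (the unique order-preserving bijection
   onto {0,...,2^q-1}). *)
Definition fH q (b : bits q) : nat := #|[set x : bits q | hprec x b]|.

Local Open Scope ring_scope.

Definition distortion q (f : bits q -> nat) (b1 b2 : bits q) : rat :=
  `|(f b1)%:R - (f b2)%:R| / (2 ^ q)%:R.

Definition Nk q (k : nat) (b : bits q) : {set bits q} :=
  [set x : bits q | (1 <= dH b x <= k)%N].

(* all distortions are >= 0, so the max starting from 0 is the max over N_k(b) *)
Definition dmax_at q (k : nat) (f : bits q -> nat) (b : bits q) : rat :=
  \big[Num.max/0]_(x in Nk k b) distortion f b x.

Definition dave_at q (k : nat) (f : bits q -> nat) (b : bits q) : rat :=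
  (\sum_(x in Nk k b) distortion f b x) / (#|Nk k b|)%:R.

Definition dmax q (k : nat) (f : bits q -> nat) : rat :=
  \big[Num.max/0]_(b : bits q) dmax_at k f b.

Definition dave q (k : nat) (f : bits q -> nat) : rat :=
  (\sum_(b : bits q) dave_at k f b) / (2 ^ q)%:R.

(* Two arrays at Hamming distance at most k differ in weight by at most k, so
   both lie in one window of k + 1 consecutive weights.  Since f_q ranks arrays
   by weight first, both images lie between the number of arrays of weight
   below the window and that number plus the size of the window; hence
   |f_q(b) - f_q(x)| <= (k + 1) C(q, q/2).  Finally C(q, q/2)^2 (q + 1) <= 4^(q+1),
   so every distortion is at most 2 (k + 1) / sqrt(q + 1). *)

From HB Require Import structures.
From mathcomp Require Import all_boot all_order all_algebra.
From mathcomp Require Import zify ring lra.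
Import Order.TTheory GRing.Theory Num.Theory.

Set Implicit Arguments.
Unset Strict Implicit.
Unset Printing Implicit Defensive.

Lemma leq_bin_succ_half q j : j < q./2 -> 'C(q, j) <= 'C(q, j.+1).
Proof.
move=> lt_j_half; have halfq := odd_double_half q.
rewrite -(leq_pmul2l (ltn0Sn j)) mul_bin_left leq_mul2r; apply/orP; right.
rewrite -muln2 in halfq; case: odd halfq => /= halfq; lia.
Qed.

Lemma leq_bin_half q w : 'C(q, w) <= 'C(q, q./2).
Proof.
have halfq := odd_double_half q; rewrite -muln2 in halfq.
have below i : i <= q./2 -> 'C(q, i) <= 'C(q, q./2).
  move=> le_i_half; rewrite -(subKn le_i_half).
  elim: (q./2 - i) (leq_subr i q./2) => [|d IHd] le_d; first by rewrite subn0.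
  apply: leq_trans (IHd (ltnW le_d)); rewrite -(subnSK le_d).
  by apply: leq_bin_succ_half; rewrite subnSK //; lia.
case: (leqP w q./2) => [|gt_w_half]; first exact: below.
case: (leqP w q) => [le_wq|]; last by move/bin_small->.
by rewrite -bin_sub // below //; case: odd halfq => /= halfq; lia.
Qed.

Lemma mul_bin_double_succ n :
  n.+1 * 'C(n.+1.*2, n.+1) = 2 * n.*2.+1 * 'C(n.*2, n).
Proof.
have Cmid : 'C(n.*2.+1, n.+1) = 'C(n.*2.+1, n).
  apply/eqP; rewrite -(eqn_pmul2l (ltn0Sn n)) mul_bin_left; apply/eqP.
  by congr (_ * _); lia.
have := mul_bin_diag n.*2.+1 n; rewrite /= Cmid => Cdiag.
by rewrite doubleS binS Cmid -mulnA Cdiag; ring.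
Qed.

Lemma bin_double_sqr_le n : 'C(n.*2, n) ^ 2 * n.*2.+1 <= 16 ^ n.
Proof.
elim: n => [|n IHn] //.
rewrite -(leq_pmul2l (expn_gt0 n.+1 2)) mulnA -expnMn mul_bin_double_succ.
set c := 'C(n.*2, n) in IHn *.
apply: (@leq_trans (4 * (n.*2.+1 * n.*2.+3) * (c ^ 2 * n.*2.+1))).
  by rewrite doubleS -!muln2 leq_eqVlt; apply/orP; left; apply/eqP; ring.
apply: (@leq_trans (4 * (n.*2.+1 * n.*2.+3) * 16 ^ n)); first by rewrite leq_mul2l IHn orbT.
rewrite (expnS 16) [X in _ <= X]mulnA leq_mul2r; apply/orP; right.
rewrite -!muln2; nia.
Qed.

Lemma bin_half_sqr_le q : 'C(q, q./2) ^ 2 * q.+1 <= 4 * 4 ^ q.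
Proof.
have sixteen n : 16 ^ n = 4 ^ n.*2 by rewrite -muln2 mulnC expnM.
have [n [->|->]] : exists n, q = n.*2 \/ q = n.*2.+1.
  by exists q./2; rewrite -{1 3}(odd_double_half q); case: odd; [right|left].
- rewrite doubleK; apply: (leq_trans (bin_double_sqr_le n)).
  by rewrite sixteen leq_pmull.
- rewrite /= uphalf_double -expnS -doubleS -sixteen.
  apply: leq_trans (bin_double_sqr_le n.+1); apply: leq_mul; last by lia.
  by rewrite leq_exp2r // doubleS binS leq_addl.
Qed.

Definition ones q (y : bits q) : {set 'I_q} := [set i | y i].

Lemma ones_inj q : injective (@ones q).
Proof.
move=> y z eq_yz; apply/ffunP => i.
by have := congr1 (fun A : {set 'I_q} => i \in A) eq_yz; rewrite /= !inE.
Qed.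

Lemma card_wH_eq q w : #|[set y : bits q | wH y == w]| = 'C(q, w).
Proof.
rewrite -(card_imset _ (@ones_inj q)) -[in RHS](card_ord q) -card_draws.
apply: eq_card => A; rewrite [in RHS]inE; apply/imsetP/idP => [[y]|cardA].
  by rewrite inE => /eqP <- ->.
have onesA : ones [ffun i => i \in A] = A by apply/setP => i; rewrite inE ffunE.
by exists [ffun i => i \in A]; rewrite // inE /wH -/(ones _) onesA.
Qed.

Lemma dH_sym q (x y : bits q) : dH x y = dH y x.
Proof. by apply: eq_card => i; rewrite !inE eq_sym. Qed.

Lemma wH_le_add_dH q (x y : bits q) : wH x <= wH y + dH x y.
Proof.
apply: leq_trans (leq_card_setU _ _); apply: subset_leq_card.
by apply/subsetP => i; rewrite !inE; case: (x i); case: (y i).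
Qed.

Definition wlight q lo : {set bits q} := [set y | wH y < lo].
Definition wband q lo d : {set bits q} := [set y | lo <= wH y < lo + d].

Lemma card_wband_le q lo d : #|wband q lo d| <= d * 'C(q, q./2).
Proof.
elim: d => [|d IHd].
  by rewrite mul0n leqn0 cards_eq0; apply/eqP/setP => y; rewrite !inE addn0; case: leqP.
have -> : wband q lo d.+1 = wband q lo d :|: [set y | wH y == lo + d].
  by apply/setP => y; rewrite !inE; case: (ltngtP (wH y) (lo + d)); lia.
apply: leq_trans (leq_card_setU _ _) _.
by rewrite mulSn addnC leq_add // card_wH_eq leq_bin_half.
Qed.

Lemma card_wlight_le_fH q (b : bits q) lo : lo <= wH b -> #|wlight q lo| <= fH b.
Proof.
move=> le_lo_b; apply: subset_leq_card; apply/subsetP => y.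
by rewrite !inE /hprec => /leq_trans ->.
Qed.

Lemma fH_le_card_wlight_wband q (b : bits q) lo d :
  b \in wband q lo d -> fH b <= #|wlight q lo| + #|wband q lo d|.
Proof.
rewrite inE => /andP[le_lo_b lt_b_hi]; apply: leq_trans (leq_card_setU _ _).
apply: subset_leq_card; apply/subsetP => y; rewrite !inE /hprec.
have le_yb : (wH y < wH b) || (wH y == wH b) && lex_lt y b -> wH y <= wH b.
  by case/orP => [/ltnW|/andP[/eqP ->]].
move/le_yb => le_y_b; case: ltnP => //= _; exact: leq_ltn_trans le_y_b lt_b_hi.
Qed.

Lemma Nk_common_wband q k (b x : bits q) :
  x \in Nk k b -> exists lo, b \in wband q lo k.+1 /\ x \in wband q lo k.+1.
Proof.
rewrite inE => /andP[_ le_dk]; exists (minn (wH b) (wH x)); rewrite !inE.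
have := wH_le_add_dH b x; have := wH_le_add_dH x b; rewrite dH_sym; lia.
Qed.

Local Open Scope ring_scope.

Definition dist_cap q k : rat := (k.+1 * 'C(q, q./2))%:R / (2 ^ q)%:R.

Lemma distortion_ge0 q (f : bits q -> nat) b x : 0 <= distortion f b x.
Proof. by rewrite divr_ge0. Qed.

Lemma distortion_fH_le q k (b x : bits q) :
  x \in Nk k b -> distortion (@fH q) b x <= dist_cap q k.
Proof.
case/Nk_common_wband => lo [b_lo x_lo].
rewrite /distortion /dist_cap ler_pM2r ?invr_gt0 ?ltr0n ?expn_gt0 //.
have cap := card_wband_le q lo k.+1; rewrite -(ler_nat rat) in cap.
have [/card_wlight_le_fH lb /card_wlight_le_fH lx] : (lo <= wH b)%N /\ (lo <= wH x)%N.
  by move: b_lo x_lo; rewrite !inE => /andP[-> _] /andP[-> _].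
have ub := fH_le_card_wlight_wband b_lo; have ux := fH_le_card_wlight_wband x_lo.
rewrite -!(ler_nat rat) in lb lx; rewrite -!(ler_nat rat) !natrD in ub ux.
by rewrite ler_norml; apply/andP; split; lra.
Qed.

Lemma mean_le (R : realFieldType) (T : finType) (A : {pred T}) (F : T -> R) D :
  0 <= D -> {in A, forall x, F x <= D} -> (\sum_(x in A) F x) / #|A|%:R <= D.
Proof.
move=> D_ge0 le_FD; have [->|A_gt0] := posnP #|A|; first by rewrite invr0 mulr0.
rewrite ler_pdivrMr ?ltr0n // mulr_natr -sumr_const; exact: ler_sum.
Qed.

Lemma dmax_fH_le q k : 0 <= dmax k (@fH q) <= dist_cap q k.
Proof.
have cap_ge0 : 0 <= dist_cap q k by rewrite divr_ge0.
rewrite bigmax_ge_id; apply: bigmax_le => // b _.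
by apply: bigmax_le => // x; apply: distortion_fH_le.
Qed.

Lemma dave_fH_le q k : 0 <= dave k (@fH q) <= dist_cap q k.
Proof.
have cap_ge0 : 0 <= dist_cap q k by rewrite divr_ge0.
have ave_ge0 b : 0 <= dave_at k (@fH q) b.
  by rewrite divr_ge0 // sumr_ge0 // => x _; apply: distortion_ge0.
have card_bits : #|bits q| = (2 ^ q)%N by rewrite card_ffun card_ord card_bool.
rewrite /dave divr_ge0 ?sumr_ge0 //= -card_bits.
apply: (mean_le (A := bits q)) => // b _; apply: mean_le => // x.
exact: distortion_fH_le.
Qed.

Lemma dist_cap_sqr_mul_le q k : dist_cap q k ^+ 2 * q.+1%:R <= 4 * k.+1%:R ^+ 2.
Proof.
have t_gt0 : 0 < (2 ^ q)%:R ^+ 2 :> rat by rewrite exprn_gt0 // ltr0n expn_gt0.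
have bin_le : 'C(q, q./2)%:R ^+ 2 * q.+1%:R <= 4 * (2 ^ q)%:R ^+ 2 :> rat.
  by rewrite -!natrX -!natrM ler_nat -expnM (mulnC q) expnM bin_half_sqr_le.
rewrite /dist_cap natrM expr_div_n exprMn mulrAC ler_pdivrMr //.
have K_ge0 : 0 <= k.+1%:R ^+ 2 :> rat by rewrite exprn_ge0.
nra.
Qed.

Lemma small_of_sqr_mul_succ_le (R : archiRealFieldType) (u : nat -> R) M :
  (forall q, u q ^+ 2 * q.+1%:R <= M) ->
  forall eps, 0 < eps -> exists N, forall q, (N <= q)%N -> u q < eps.
Proof.
move=> le_uM eps eps_gt0.
have M_ge0 : 0 <= M / eps ^+ 2.
  by rewrite divr_ge0 ?sqr_ge0 // (le_trans _ (le_uM 0%N)) // mulr_ge0 ?sqr_ge0.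
exists (Num.bound (M / eps ^+ 2)) => q le_Nq.
have : M < eps ^+ 2 * q.+1%:R.
  rewrite mulrC -ltr_pdivrMr ?exprn_gt0 //; apply: lt_le_trans (archi_boundP M_ge0) _.
  by rewrite ler_nat leqW.
have := le_uM q; case: (ltP (u q) eps) => // le_eps_u.
have : eps ^+ 2 <= u q ^+ 2 by rewrite lerXn2r // nnegrE ltW // (lt_le_trans eps_gt0).
move/(ler_wpM2r (ler0n R q.+1)); lra.
Qed.

Theorem theorem1 (k : nat) (hk : (1 <= k)%N) :
  (forall eps : rat, 0 < eps ->
     exists N : nat, forall q : nat, (N <= q)%N -> `|dmax k (@fH q)| < eps) /\
  (forall eps : rat, 0 < eps ->
     exists N : nat, forall q : nat, (N <= q)%N -> `|dave k (@fH q)| < eps).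
Proof.
have cap_small := small_of_sqr_mul_succ_le (dist_cap_sqr_mul_le^~ k).
split=> eps /cap_small[N capN]; exists N => q /capN cap_lt.
- have /andP[dmax_ge0 dmax_le] := dmax_fH_le q k.
  by rewrite ger0_norm // (le_lt_trans dmax_le).
- have /andP[dave_ge0 dave_le] := dave_fH_le q k.
  by rewrite ger0_norm // (le_lt_trans dave_le).
Qed.
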